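(* Let $\Gamma_0$ be a normal system with entropy $S$, and let $\Gamma$ be a further state space such that $\prec$ is defined on $\Gamma$, on $\Gamma\times\Gamma_0$ and on multiple products of these spaces, satisfying (A1), (A2), (A3), (A6) and the cancellation law (comparability (B2) is NOT assumed). Fix reference states $Z_0\in\Gamma_0$, $X_1\in\Gamma$ and assume (B1): for every $X\in\Gamma$ there exist $Z',Z''\in\Gamma_0$ with $(X_1,Z')\prec(X,Z_0)\prec(X_1,Z'')$. For $X\in\Gamma$ define $$S_-(X)=\sup\{S(Z')\,:\,Z'\in\Gamma_0,\ (X_1,Z')\prec(X,Z_0)\},\qquad S_+(X)=\inf\{S(Z'')\,:\,Z''\in\Gamma_0,\ (X,Z_0)\prec(X_1,Z'')\}.$$ Then: (1) For $X,Y\in\Gamma$, $X\prec Y$ implies $S_-(X)\le S_-(Y)$ and $S_+(X)\le S_+(Y)$. (2) For $X,Y\in\Gamma$, if $S_+(X)\le S_-(Y)$ then $X\prec Y$. (3) Define $S_\pm$ on $\Gamma\times\Gamma$ analogously, using $\Gamma_0\times\Gamma_0$ (with entropy $S(Z,W)=S(Z)+S(W)$) as entropy meter and $(X_1,X_1)\in\Gamma\times\Gamma$, $(Z_0,Z_0)\in\Gamma_0\times\Gamma_0$ as reference points, i.e. $S_-(X,Y)=\sup\{S(Z')+S(W')\,:\,(X_1,X_1,Z',W')\prec(X,Y,Z_0,Z_0)\}$ and $S_+(X,Y)=\inf\{S(Z'')+S(W'')\,:\,(X,Y,Z_0,Z_0)\prec(X_1,X_1,Z'',W'')\}$. Then for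 all $X,Y\in\Gamma$, $$S_-(X)+S_-(Y)\le S_-(X,Y)\le S_+(X,Y)\le S_+(X)+S_+(Y).$$ (4) Define $S_\pm$ on $\Gamma\times\Gamma_0$ analogously, using $\Gamma_0$ as entropy meter and $(X_1,Z_0)\in\Gamma\times\Gamma_0$, $Z_0\in\Gamma_0$ as reference points, i.e. $S_-(X,Z)=\sup\{S(Z')\,:\,(X_1,Z_0,Z')\prec(X,Z,Z_0)\}$ and $S_+(X,Z)=\inf\{S(Z'')\,:\,(X,Z,Z_0)\prec(X_1,Z_0,Z'')\}$. Then $S_\pm(X,Z_0)=S_\pm(X)$ for $X\in\Gamma$ and $S_\pm(X_1,Z)=S(Z)$ for $Z\in\Gamma_0$. Moreover, if $\hat S$ is any function on $\Gamma\times\Gamma_0$ that is monotone with respect to $\prec$ (i.e. $A\prec B$ implies $\hat S(A)\le\hat S(B)$) and satisfies $\hat S(X_1,Z)=S(Z)$ for all $Z\in\Gamma_0$, then $S_-(X)\le\hat S(X,Z_0)\le S_+(X)$ for all $X\in\Gamma$.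
   Context: Setting (axiomatic thermodynamics via adiabatic accessibility). States belong to state spaces; for states $X,Y$ (possibly in different spaces) $X\prec Y$ means $Y$ can be reached from $X$ by an adiabatic process; $X\sim_A Y$ means $X\prec Y$ and $Y\prec X$. For state spaces $\Gamma_1,\Gamma_2$ the product $\Gamma_1\times\Gamma_2$ consists of pairs $(X_1,X_2)$; multiple products are formed likewise, and $(X,Y,Z,W)$ denotes a state of a fourfold product. For a scalable space, $\lambda X$ ($\lambda>0$) denotes a scaled state. Assumptions on $\prec$: (A1) Reflexivity: $X\sim_A X$. (A2) Transitivity: $X\prec Y$, $Y\prec Z$ imply $X\prec Z$. (A3) Consistency: $X\prec X'$ and $Y\prec Y'$ imply $(X,Y)\prec(X',Y')$. (A6) Stability with respect to $\Gamma_0$: if $(X,\varepsilon Z_0)\prec(Y,\varepsilon Z_1)$ with $Z_0,Z_1\in\Gamma_0$ for a sequence of $\varepsilon>0$ tending to zero, then $X\prec Y$. Cancellation law: $(X_1,X_2)\prec(X_1,Y_2)$ implies $X_2\prec Y_2$. A normal system $\Gamma_0$ is a state space of equilibrium states on which scaling is defined, equipped with an additive and extensive entropy function $S:\Gamma_0\to\mathbb R$ ($S(\lambda Z)=\lambda S(Z)$, $S$ additive on products of scaled copies) which characterizes $\prec$: for two states in the same product of scaled copies of $\Gamma_0$, one precedes the other iff its entropy is $\le$ that of the other; moreover the range of $S$ is connected (if $S(X)<S(Y)$, every value in $[S(X),S(Y)]$ is attained by $S$ on $\Gamma_0$). Scaling is not assumed to be defined on $\Gamma$. *)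

From Stdlib Require Import Reals.
From Coquelicot Require Import Coquelicot.
Open Scope R_scope.

(* Compound states: scaled copies  t Z  of states of the normal system Gamma0
   (t > 0), states of Gamma, and (formal) pairs = states of product spaces. *)
Inductive cstate (G0 G : Type) : Type :=
| St0 : posreal -> G0 -> cstate G0 G
| StG : G -> cstate G0 G
| StP : cstate G0 G -> cstate G0 G -> cstate G0 G.
Arguments St0 {G0 G}. Arguments StG {G0 G}. Arguments StP {G0 G}.

Definition one_pos : posreal := mkposreal 1 Rlt_0_1.
Definition g0 {G0 G : Type} (z : G0) : cstate G0 G := St0 one_pos z.

Section Setting.
Context {G0 G : Type}.
Implicit Types (a b c : cstate G0 G).

(* two states lie in the same product of scaled copies of Gamma0 *)
Fixpoint same_prod0 a b : Prop :=
  match a, b with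
  | St0 t _, St0 s _ => pos t = pos s
  | StP a1 a2, StP b1 b2 => same_prod0 a1 b1 /\ same_prod0 a2 b2
  | _, _ => False
  end.

Fixpoint ent0 (S : G0 -> R) a : R :=
  match a with
  | St0 t z => pos t * S z
  | StG _ => 0
  | StP a1 a2 => ent0 S a1 + ent0 S a2
  end.

Variable prec : cstate G0 G -> cstate G0 G -> Prop.

Definition A1_reflexive : Prop := forall a, prec a a.
Definition A2_transitive : Prop := forall a b c, prec a b -> prec b c -> prec a c.
Definition A3_consistent : Prop :=
  forall a a' b b', prec a a' -> prec b b' -> prec (StP a b) (StP a' b').
Definition A6_stable : Prop :=
  forall a b (z0 z1 : G0) (eps : nat -> posreal),
    Un_cv (fun n => pos (eps n)) 0 ->
    (forall n, prec (StP a (St0 (eps n) z0)) (StP b (St0 (eps n) z1))) ->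
    prec a b.
Definition cancellation_law : Prop :=
  forall a b c, prec (StP a b) (StP a c) -> prec b c.
(* standard identification of products: commutativity and associativity
   (Gamma1 x Gamma2 = Gamma2 x Gamma1, (Gamma1 x Gamma2) x Gamma3 = Gamma1 x (Gamma2 x Gamma3)) *)
Definition product_identifications : Prop :=
  (forall a b, prec (StP a b) (StP b a)) /\
  (forall a b c, prec (StP (StP a b) c) (StP a (StP b c))
              /\ prec (StP a (StP b c)) (StP (StP a b) c)).

Definition normal_system (S : G0 -> R) : Prop :=
  (forall a b, same_prod0 a b -> (prec a b <-> ent0 S a <= ent0 S b)) /\
  (forall z1 z2 : G0, S z1 < S z2 ->
     forall s, S z1 <= s <= S z2 -> exists z : G0, S z = s).

Definition B1_condition (Z0 : G0) (X1 : G) : Prop :=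
  forall X : G, exists Z' Z'' : G0,
    prec (StP (StG X1) (g0 Z')) (StP (StG X) (g0 Z0)) /\
    prec (StP (StG X) (g0 Z0)) (StP (StG X1) (g0 Z'')).

Variables (S : G0 -> R) (Z0 : G0) (X1 : G).

Definition Sminus (X : G) : Rbar :=
  Lub_Rbar (fun s => exists Z' : G0, s = S Z' /\
    prec (StP (StG X1) (g0 Z')) (StP (StG X) (g0 Z0))).
Definition Splus (X : G) : Rbar :=
  Glb_Rbar (fun s => exists Z'' : G0, s = S Z'' /\
    prec (StP (StG X) (g0 Z0)) (StP (StG X1) (g0 Z''))).

Definition Sminus2 (X Y : G) : Rbar :=
  Lub_Rbar (fun s => exists Z' W' : G0, s = S Z' + S W' /\
    prec (StP (StP (StG X1) (StG X1)) (StP (g0 Z') (g0 W')))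
         (StP (StP (StG X) (StG Y)) (StP (g0 Z0) (g0 Z0)))).
Definition Splus2 (X Y : G) : Rbar :=
  Glb_Rbar (fun s => exists Z'' W'' : G0, s = S Z'' + S W'' /\
    prec (StP (StP (StG X) (StG Y)) (StP (g0 Z0) (g0 Z0)))
         (StP (StP (StG X1) (StG X1)) (StP (g0 Z'') (g0 W'')))).

Definition SminusG0 (X : G) (Z : G0) : Rbar :=
  Lub_Rbar (fun s => exists Z' : G0, s = S Z' /\
    prec (StP (StP (StG X1) (g0 Z0)) (g0 Z'))
         (StP (StP (StG X) (g0 Z)) (g0 Z0))).
Definition SplusG0 (X : G) (Z : G0) : Rbar :=
  Glb_Rbar (fun s => exists Z'' : G0, s = S Z'' /\
    prec (StP (StP (StG X) (g0 Z)) (g0 Z0))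
         (StP (StP (StG X1) (g0 Z0)) (g0 Z''))).

End Setting.

From Stdlib Require Import Reals.
From Coquelicot Require Import Coquelicot.
From Stdlib Require Import Lra Classical.
Open Scope R_scope.

(* Transitivity makes both
   readings monotone.  If S_+(X) <= S_-(Y), then for every d > 0 some upper
   reading of X exceeds some lower reading of Y by at most d, so
   (X,Z0) -< (X1,Z'') and (X1,Z') -< (Y,Z0) with S(Z'') <= S(Z') + d; stability
   (A6) lets an eps-copy of the meter pay for the deficit d, and cancellation
   yields X -< Y.  For pairs, consistency combines the sandwiching processes of
   X and Y, which gives the (super/sub)additivity in (3); in (4) the common
   reference factors cancel and the normal system decides the comparison. *)

Lemma Lub_Rbar_le (E : R -> Prop) (c : Rbar) :
  (forall x, E x -> Rbar_le x c) -> Rbar_le (Lub_Rbar E) c.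
Proof. apply (Lub_Rbar_correct E). Qed.

Lemma le_Lub_Rbar (E : R -> Prop) (x : R) : E x -> Rbar_le x (Lub_Rbar E).
Proof. apply (Lub_Rbar_correct E). Qed.

Lemma le_Glb_Rbar (E : R -> Prop) (c : Rbar) :
  (forall x, E x -> Rbar_le c x) -> Rbar_le c (Glb_Rbar E).
Proof. apply (Glb_Rbar_correct E). Qed.

Lemma Lub_Rbar_subset (E1 E2 : R -> Prop) :
  (forall x, E1 x -> E2 x) -> Rbar_le (Lub_Rbar E1) (Lub_Rbar E2).
Proof.
  intros H.
  exact (is_lub_Rbar_subset E2 E1 _ _ H (Lub_Rbar_correct E2) (Lub_Rbar_correct E1)).
Qed.

Lemma Glb_Rbar_subset (E1 E2 : R -> Prop) :
  (forall x, E1 x -> E2 x) -> Rbar_le (Glb_Rbar E2) (Glb_Rbar E1).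
Proof.
  intros H.
  exact (is_glb_Rbar_subset E2 E1 _ _ H (Glb_Rbar_correct E2) (Glb_Rbar_correct E1)).
Qed.

Lemma Lub_Rbar_le_Glb_Rbar (A B : R -> Prop) :
  (forall x y, A x -> B y -> x <= y) -> Rbar_le (Lub_Rbar A) (Glb_Rbar B).
Proof.
  intros H. apply le_Glb_Rbar. intros y Hy.
  apply Lub_Rbar_le. intros x Hx. exact (H x y Hx Hy).
Qed.

Lemma Lub_Rbar_opp (E : R -> Prop) :
  Lub_Rbar (fun x => E (- x)) = Rbar_opp (Glb_Rbar E).
Proof. apply is_lub_Rbar_unique, is_lub_Rbar_opp, Glb_Rbar_correct. Qed.

Lemma Rbar_le_between_finite (l : Rbar) (a b : R) :
  Rbar_le a l -> Rbar_le l b -> l = Finite (real l).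
Proof. destruct l; simpl; tauto. Qed.

Lemma Lub_Rbar_plus_le (A B C : R -> Prop) (x0 y0 : R) : A x0 -> B y0 ->
  (forall x y, A x -> B y -> C (x + y)) ->
  Rbar_le (Rbar_plus (Lub_Rbar A) (Lub_Rbar B)) (Lub_Rbar C).
Proof.
  intros HA HB HC.
  pose proof (le_Lub_Rbar C _ (HC _ _ HA HB)) as HC0.
  destruct (Lub_Rbar C) as [c| |] eqn:Ec; [| now destruct (Rbar_plus _ _) | easy].
  assert (Hsum : forall x y, A x -> B y -> x + y <= c).
  { intros x y Hx Hy. pose proof (le_Lub_Rbar C _ (HC _ _ Hx Hy)) as K.
    now rewrite Ec in K. }
  assert (HlubA : forall y, B y -> Rbar_le (Lub_Rbar A) (c - y)).
  { intros y Hy. apply Lub_Rbar_le. intros x Hx. simpl. pose proof (Hsum x y Hx Hy). lra. }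
  set (a := real (Lub_Rbar A)).
  assert (Ea : Lub_Rbar A = Finite a)
    by exact (Rbar_le_between_finite _ _ _ (le_Lub_Rbar A _ HA) (HlubA _ HB)).
  assert (HlubB : Rbar_le (Lub_Rbar B) (c - a)).
  { apply Lub_Rbar_le. intros y Hy. pose proof (HlubA y Hy) as K.
    rewrite Ea in K. simpl in *. lra. }
  rewrite (Rbar_le_between_finite _ _ _ (le_Lub_Rbar B _ HB) HlubB) in HlubB |- *.
  rewrite Ea. simpl in *. lra.
Qed.

Lemma Glb_Rbar_plus_le (A B C : R -> Prop) (x0 y0 : R) : A x0 -> B y0 ->
  (forall x y, A x -> B y -> C (x + y)) ->
  Rbar_le (Glb_Rbar C) (Rbar_plus (Glb_Rbar A) (Glb_Rbar B)).
Proof.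
  intros HA HB HC.
  apply Rbar_opp_le. rewrite <- Rbar_plus_opp, <- !Lub_Rbar_opp.
  apply Lub_Rbar_plus_le with (- x0) (- y0); rewrite ?Ropp_involutive; auto.
  intros x y Hx Hy. rewrite Ropp_plus_distr. auto.
Qed.

Lemma Glb_Rbar_le_Lub_Rbar_approx (A B : R -> Prop) (x0 y0 : R) : A x0 -> B y0 ->
  Rbar_le (Glb_Rbar A) (Lub_Rbar B) ->
  forall d, 0 < d -> exists x y, A x /\ B y /\ x <= y + d.
Proof.
  intros HA HB Hle d Hd. apply NNPP. intros Hno.
  assert (Hsep : forall x y, A x -> B y -> y <= x - d).
  { intros x y Hx Hy. destruct (Rle_lt_dec x (y + d)); [|lra].
    exfalso. apply Hno. eauto. }
  assert (HlubB : forall x, A x -> Rbar_le (Lub_Rbar B) (x - d)).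
  { intros x Hx. apply Lub_Rbar_le. intros y Hy. exact (Hsep x y Hx Hy). }
  set (b := real (Lub_Rbar B)).
  assert (Eb : Lub_Rbar B = Finite b)
    by exact (Rbar_le_between_finite _ _ _ (le_Lub_Rbar B _ HB) (HlubB _ HA)).
  assert (HglbA : Rbar_le (b + d) (Glb_Rbar A)).
  { apply le_Glb_Rbar. intros x Hx. pose proof (HlubB x Hx) as K.
    rewrite Eb in K. simpl in *. lra. }
  pose proof (Rbar_le_trans _ _ _ HglbA Hle) as K. rewrite Eb in K. simpl in K. lra.
Qed.

Section Accessibility.

Context {G0 G : Type}.
Variable prec : cstate G0 G -> cstate G0 G -> Prop.
Variable S : G0 -> R.
Hypotheses (hA1 : A1_reflexive prec) (hA2 : A2_transitive prec)
  (hA3 : A3_consistent prec) (hA6 : A6_stable prec)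
  (hcanc : cancellation_law prec) (hprod : product_identifications prec)
  (hnorm : normal_system prec S).

Lemma prec_pair_l a a' b : prec a a' -> prec (StP a b) (StP a' b).
Proof. intros H. now apply hA3. Qed.

Lemma prec_pair_r a b b' : prec b b' -> prec (StP a b) (StP a b').
Proof. intros H. now apply hA3. Qed.

Lemma prec_swap a b : prec (StP a b) (StP b a).
Proof. apply hprod. Qed.

Lemma prec_assoc_l a b c : prec (StP (StP a b) c) (StP a (StP b c)).
Proof. apply hprod. Qed.

Lemma prec_assoc_r a b c : prec (StP a (StP b c)) (StP (StP a b) c).
Proof. apply hprod. Qed.

Lemma prec_exchange a b c d :
  prec (StP (StP a b) (StP c d)) (StP (StP a c) (StP b d)).
Proof.
  eapply hA2; [apply prec_assoc_l|].
  eapply hA2; [apply prec_pair_r, prec_assoc_r|].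
  eapply hA2; [apply prec_pair_r, prec_pair_l, prec_swap|].
  eapply hA2; [apply prec_pair_r, prec_assoc_l|].
  apply prec_assoc_r.
Qed.

Lemma prec_cancel_r a b c : prec (StP a c) (StP b c) -> prec a b.
Proof.
  intros H. apply (hcanc c).
  eapply hA2; [apply prec_swap|]. eapply hA2; [exact H|]. apply prec_swap.
Qed.

Lemma prec_reassoc_iff a b c a' b' c' :
  prec (StP (StP a b) c) (StP (StP a' b') c') <->
  prec (StP a (StP b c)) (StP a' (StP b' c')).
Proof.
  split; intros H.
  - eapply hA2; [apply prec_assoc_r|]. eapply hA2; [exact H|]. apply prec_assoc_l.
  - eapply hA2; [apply prec_assoc_l|]. eapply hA2; [exact H|]. apply prec_assoc_r.
Qed.

Lemma prec_cancel_middle a b c a' b' :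
  prec (StP (StP a c) b) (StP (StP a' c) b') <-> prec (StP a b) (StP a' b').
Proof.
  assert (Hout : forall a b, prec (StP (StP a c) b) (StP c (StP a b))).
  { intros. eapply hA2; [apply prec_pair_l, prec_swap|]. apply prec_assoc_l. }
  assert (Hin : forall a b, prec (StP c (StP a b)) (StP (StP a c) b)).
  { intros. eapply hA2; [apply prec_assoc_r|]. apply prec_pair_l, prec_swap. }
  split; intros H.
  - apply (hcanc c). eapply hA2; [apply Hin|]. eapply hA2; [exact H|]. apply Hout.
  - eapply hA2; [apply Hout|]. eapply hA2; [apply prec_pair_r, H|]. apply Hin.
Qed.

Lemma prec_g0 z z' : S z <= S z' -> prec (g0 z) (g0 z').
Proof. intros H. apply (proj1 hnorm); simpl; [reflexivity | lra]. Qed.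

Lemma prec_meter2_iff a z w z' w' :
  prec (StP a (StP (g0 z) (g0 w))) (StP a (StP (g0 z') (g0 w'))) <->
  S z + S w <= S z' + S w'.
Proof.
  assert (Hnorm2 : prec (StP (g0 z) (g0 w)) (StP (g0 z') (g0 w')) <->
                   S z + S w <= S z' + S w').
  { rewrite (proj1 hnorm); [simpl | split; reflexivity]. split; lra. }
  split; intros H.
  - apply Hnorm2. exact (hcanc _ _ _ H).
  - apply prec_pair_r, Hnorm2, H.
Qed.

Lemma prec_reference_meter_iff a z w z' w' :
  prec (StP (StP a (g0 z)) (g0 w)) (StP (StP a (g0 z')) (g0 w')) <->
  S z + S w <= S z' + S w'.
Proof. rewrite prec_reassoc_iff. apply prec_meter2_iff. Qed.

Lemma prec_of_meter_approx A B U :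
  (forall d, 0 < d -> exists z'' z',
     prec A (StP U (g0 z'')) /\ prec (StP U (g0 z')) B /\ S z'' <= S z' + d) ->
  prec A B.
Proof.
  intros H.
  destruct (classic (exists w0 w1, S w0 < S w1)) as [[w0 [w1 Hw]] | Hconst].
  - apply (hA6 A B w0 w1 RinvN RinvN_cv). intros n.
    generalize (RinvN n). intros [e He].
    (* the meter copy e w0 -> e w1 gains entropy e (S w1 - S w0), covering d *)
    destruct (H (e * (S w1 - S w0))) as [z'' [z' [HA [HB Hd]]]].
    { apply Rmult_lt_0_compat; lra. }
    eapply hA2; [apply prec_pair_l, HA|].
    eapply hA2; [apply prec_assoc_l|].
    eapply hA2; [apply prec_pair_r with (b' := StP (g0 z') (St0 (mkposreal e He) w1))|].
    { apply (proj1 hnorm); simpl; [split; reflexivity | nra]. }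
    eapply hA2; [apply prec_assoc_r|].
    apply prec_pair_l, HB.
  - destruct (H 1 Rlt_0_1) as [z'' [z' [HA [HB _]]]].
    eapply hA2; [exact HA|]. eapply hA2; [|exact HB].
    apply prec_pair_r, prec_g0.
    destruct (Rle_or_lt (S z'') (S z')) as [Hle | Hlt]; [exact Hle|].
    exfalso. apply Hconst. now exists z', z''.
Qed.

Variables (Z0 : G0) (X1 : G).

Lemma Sminus_monotone X Y : prec (StG X) (StG Y) ->
  Rbar_le (Sminus prec S Z0 X1 X) (Sminus prec S Z0 X1 Y).
Proof.
  intros HXY. apply Lub_Rbar_subset. intros s [Z' [-> HZ']].
  exists Z'. split; [reflexivity|]. eapply hA2; [exact HZ'|]. now apply prec_pair_l.
Qed.

Lemma Splus_monotone X Y : prec (StG X) (StG Y) ->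
  Rbar_le (Splus prec S Z0 X1 X) (Splus prec S Z0 X1 Y).
Proof.
  intros HXY. apply Glb_Rbar_subset. intros s [Z'' [-> HZ'']].
  exists Z''. split; [reflexivity|]. eapply hA2; [|exact HZ'']. now apply prec_pair_l.
Qed.

Hypothesis hB1 : B1_condition prec Z0 X1.

Lemma prec_of_Splus_le_Sminus X Y :
  Rbar_le (Splus prec S Z0 X1 X) (Sminus prec S Z0 X1 Y) -> prec (StG X) (StG Y).
Proof.
  intros Hle. apply prec_cancel_r with (g0 Z0).
  apply prec_of_meter_approx with (StG X1). intros d Hd.
  destruct (hB1 X) as [_ [zX [_ HX]]]. destruct (hB1 Y) as [zY [_ [HY _]]].
  destruct (Glb_Rbar_le_Lub_Rbar_approx _ _ (S zX) (S zY) (ex_intro _ zX (conj eq_refl HX))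
              (ex_intro _ zY (conj eq_refl HY)) Hle d Hd)
    as [x [y [[z'' [-> Hz'']] [[z' [-> Hz']] Hxy]]]].
  now exists z'', z'.
Qed.

Lemma Sminus_plus_le_Sminus2 X Y :
  Rbar_le (Rbar_plus (Sminus prec S Z0 X1 X) (Sminus prec S Z0 X1 Y))
          (Sminus2 prec S Z0 X1 X Y).
Proof.
  destruct (hB1 X) as [zX [_ [HX _]]]. destruct (hB1 Y) as [zY [_ [HY _]]].
  apply Lub_Rbar_plus_le with (S zX) (S zY); [now exists zX | now exists zY |].
  intros x y [z' [-> Hz']] [w' [-> Hw']]. exists z', w'. split; [reflexivity|].
  eapply hA2; [apply prec_exchange|].
  eapply hA2; [apply hA3; [exact Hz' | exact Hw']|]. apply prec_exchange.
Qed.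

Lemma Sminus2_le_Splus2 X Y :
  Rbar_le (Sminus2 prec S Z0 X1 X Y) (Splus2 prec S Z0 X1 X Y).
Proof.
  apply Lub_Rbar_le_Glb_Rbar. intros x y [z' [w' [-> H']]] [z'' [w'' [-> H'']]].
  apply (prec_meter2_iff (StP (StG X1) (StG X1))). eapply hA2; eauto.
Qed.

Lemma Splus2_le_Splus_plus X Y :
  Rbar_le (Splus2 prec S Z0 X1 X Y)
          (Rbar_plus (Splus prec S Z0 X1 X) (Splus prec S Z0 X1 Y)).
Proof.
  destruct (hB1 X) as [_ [zX [_ HX]]]. destruct (hB1 Y) as [_ [zY [_ HY]]].
  apply Glb_Rbar_plus_le with (S zX) (S zY); [now exists zX | now exists zY |].
  intros x y [z'' [-> Hz'']] [w'' [-> Hw'']]. exists z'', w''. split; [reflexivity|].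
  eapply hA2; [apply prec_exchange|].
  eapply hA2; [apply hA3; [exact Hz'' | exact Hw'']|]. apply prec_exchange.
Qed.

Lemma SminusG0_reference X : SminusG0 prec S Z0 X1 X Z0 = Sminus prec S Z0 X1 X.
Proof.
  apply Lub_Rbar_eqset. intros s.
  split; intros [z [-> Hz]]; exists z; split; try reflexivity;
    [apply prec_cancel_middle in Hz | apply prec_cancel_middle]; exact Hz.
Qed.

Lemma SplusG0_reference X : SplusG0 prec S Z0 X1 X Z0 = Splus prec S Z0 X1 X.
Proof.
  apply Glb_Rbar_eqset. intros s.
  split; intros [z [-> Hz]]; exists z; split; try reflexivity;
    [apply prec_cancel_middle in Hz | apply prec_cancel_middle]; exact Hz.
Qed.

Lemma SminusG0_X1 Z : SminusG0 prec S Z0 X1 X1 Z = Finite (S Z).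
Proof.
  apply is_lub_Rbar_unique. split.
  - intros s [z' [-> Hz']]. apply prec_reference_meter_iff in Hz'. simpl. lra.
  - intros b Hb. apply Hb. exists Z. split; [reflexivity|].
    apply prec_reference_meter_iff. lra.
Qed.

Lemma SplusG0_X1 Z : SplusG0 prec S Z0 X1 X1 Z = Finite (S Z).
Proof.
  apply is_glb_Rbar_unique. split.
  - intros s [z'' [-> Hz'']]. apply prec_reference_meter_iff in Hz''. simpl. lra.
  - intros b Hb. apply Hb. exists Z. split; [reflexivity|].
    apply prec_reference_meter_iff. lra.
Qed.

End Accessibility.

Section MonotoneExtension.

Context {G0 G : Type}.
Variables (prec : cstate G0 G -> cstate G0 G -> Prop) (S : G0 -> R) (Z0 : G0) (X1 : G).
Variable Shat : G -> G0 -> R.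
Hypotheses
  (hmono : forall X Y Z W, prec (StP (StG X) (g0 Z)) (StP (StG Y) (g0 W)) ->
                           Shat X Z <= Shat Y W)
  (hX1 : forall Z, Shat X1 Z = S Z).

Lemma Sminus_le_monotone_extension X :
  Rbar_le (Sminus prec S Z0 X1 X) (Finite (Shat X Z0)).
Proof.
  apply Lub_Rbar_le. intros s [z' [-> Hz']]. simpl. rewrite <- hX1. now apply hmono.
Qed.

Lemma monotone_extension_le_Splus X :
  Rbar_le (Finite (Shat X Z0)) (Splus prec S Z0 X1 X).
Proof.
  apply le_Glb_Rbar. intros s [z'' [-> Hz'']]. simpl. rewrite <- hX1. now apply hmono.
Qed.

End MonotoneExtension.

Theorem proposition1 (G0 G : Type) (prec : cstate G0 G -> cstate G0 G -> Prop)
  (S : G0 -> R) (Z0 : G0) (X1 : G)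
  (hA1 : A1_reflexive prec) (hA2 : A2_transitive prec)
  (hA3 : A3_consistent prec) (hA6 : A6_stable prec)
  (hcanc : cancellation_law prec) (hprod : product_identifications prec)
  (hnorm : normal_system prec S) (hB1 : B1_condition prec Z0 X1) :
  (* (1) *)
  (forall X Y : G, prec (StG X) (StG Y) ->
     Rbar_le (Sminus prec S Z0 X1 X) (Sminus prec S Z0 X1 Y) /\
     Rbar_le (Splus prec S Z0 X1 X) (Splus prec S Z0 X1 Y)) /\
  (* (2) *)
  (forall X Y : G, Rbar_le (Splus prec S Z0 X1 X) (Sminus prec S Z0 X1 Y) ->
     prec (StG X) (StG Y)) /\
  (* (3) *)
  (forall X Y : G,
     Rbar_le (Rbar_plus (Sminus prec S Z0 X1 X) (Sminus prec S Z0 X1 Y))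
             (Sminus2 prec S Z0 X1 X Y) /\
     Rbar_le (Sminus2 prec S Z0 X1 X Y) (Splus2 prec S Z0 X1 X Y) /\
     Rbar_le (Splus2 prec S Z0 X1 X Y)
             (Rbar_plus (Splus prec S Z0 X1 X) (Splus prec S Z0 X1 Y))) /\
  (* (4) *)
  ((forall X : G, SminusG0 prec S Z0 X1 X Z0 = Sminus prec S Z0 X1 X /\
                  SplusG0 prec S Z0 X1 X Z0 = Splus prec S Z0 X1 X) /\
   (forall Z : G0, SminusG0 prec S Z0 X1 X1 Z = Finite (S Z) /\
                   SplusG0 prec S Z0 X1 X1 Z = Finite (S Z)) /\
   (forall Shat : G -> G0 -> R,
      (forall (X Y : G) (Z W : G0),
         prec (StP (StG X) (g0 Z)) (StP (StG Y) (g0 W)) -> Shat X Z <= Shat Y W) ->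
      (forall Z : G0, Shat X1 Z = S Z) ->
      forall X : G,
        Rbar_le (Sminus prec S Z0 X1 X) (Finite (Shat X Z0)) /\
        Rbar_le (Finite (Shat X Z0)) (Splus prec S Z0 X1 X))).
Proof.
  split; [|split; [|split; [|split; [|split]]]].
  - intros X Y HXY.
    split; [apply Sminus_monotone | apply Splus_monotone]; assumption.
  - apply prec_of_Splus_le_Sminus; assumption.
  - intros X Y.
    split; [|split];
      [apply Sminus_plus_le_Sminus2 | apply Sminus2_le_Splus2 | apply Splus2_le_Splus_plus];
      assumption.
  - intros X.
    split; [apply SminusG0_reference | apply SplusG0_reference]; assumption.
  - intros Z. split; [apply SminusG0_X1 | apply SplusG0_X1]; assumption.
  - intros Shat hmono hX1 X.
    split; [apply Sminus_le_monotone_extension | apply monotone_extension_le_Splus];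
      assumption.
Qed.
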